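(* Let $\Gamma$ be a splice diagram satisfying the edge determinant condition, and let $v$ be a node of $\Gamma$ with adjacent vertices $u_1,\dots,u_{\delta_v}$. Then (1) the vectors $\rho(u_1),\dots,\rho(u_{\delta_v})$ are linearly independent in $\mathbb{R}^n$; (2) $\rho(v)$ lies in the relative interior of the convex hull of $\{\rho(u_1),\dots,\rho(u_{\delta_v})\}$.
   Context: A splice diagram is a finite tree $\Gamma$ with at least one vertex of valency $\geq3$ and no vertex of valency $2$; vertices of valency $1$ are leaves, others nodes; $\delta_v$ is the valency of $v$. For each node $v$ and edge $e$ at $v$ a positive integer weight $d_{v,e}$ is given; $d_v=\prod_{e\ni v}d_{v,e}$; $d_{v,u}$ is the weight at $v$ of the edge toward $u$. For distinct vertices $u,v$, $\ell_{u,v}$ is the product of all $d_{w,e}$ with $w$ a node on the geodesic $[u,v]$ and $e$ an edge at $w$ not in $[u,v]$. Edge determinant condition: $d_{u,v}d_{v,u}>\ell_{u,v}$ for every edge $[u,v]$ between nodes. With $n$ leaves, $w_\lambda$ is the standard basis vector of $\mathbb{R}^n$ of leaf $\lambda$, $w_u=\sum_\lambda\ell_{u,\lambda}w_\lambda$ for a node $u$, and $\rho(u)=w_u/|w_u|$ ($1$-norm) for every vertex $u$. *)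

From HB Require Import structures.
From mathcomp Require Import all_boot all_order all_algebra.
From mathcomp Require Import boolp reals.
Set Implicit Arguments. Unset Strict Implicit. Unset Printing Implicit Defensive.
Import Order.TTheory GRing.Theory Num.Theory.
Local Open Scope ring_scope.

Section SpliceDiagram.
Variables (V : finType) (e : rel V) (d : V -> V -> nat).

Definition valency (v : V) : nat := #|[set x | e v x]|.
Definition leafb (v : V) : bool := valency v == 1%N.
Definition nodeb (v : V) : bool := (1 < valency v)%N.

Definition is_tree : Prop :=
  [/\ symmetric e, irreflexive e,
      (forall x y, connect e x y) &
      (forall p : seq V, uniq p -> (2 < size p)%N -> ~~ cycle e p)].

Definition splice_diagram : Prop :=
  [/\ is_tree,
      (exists v, 3 <= valency v)%N,
      (forall v, valency v != 2%N) &
      (forall v x, nodeb v -> e v x -> 0 < d v x)%N].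

Definition on_geodesic (u v w : V) : Prop :=
  exists p : seq V, [/\ path e u p, last u p = v, uniq (u :: p) & w \in u :: p].

(** l_{u,v}: product of the d_{w,x} over nodes w on [u,v] and edges [w,x]
    at w not on [u,v] (equivalently x not on [u,v]). *)
Definition ell (u v : V) : nat :=
  (\prod_(w | nodeb w && `[< on_geodesic u v w >])
     \prod_(x | e w x && ~~ `[< on_geodesic u v x >]) d w x)%N.

Definition edge_determinant_condition : Prop :=
  forall u v, e u v -> nodeb u -> nodeb v -> (ell u v < d u v * d v u)%N.

Definition leaves : {set V} := [set x | leafb x].

Variable R : realType.

(** R^n with n = number of leaves; coordinate j corresponds to leaf enum_val j *)
Definition wvec (u : V) : 'rV[R]_#|leaves| :=
  \row_(j < #|leaves|)
    (if leafb u then ((u == enum_val j) : nat)%:R else (ell u (enum_val j))%:R).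

Definition norm1 n (x : 'rV[R]_n) : R := \sum_(j < n) `|x ord0 j|.

Definition rho (u : V) : 'rV[R]_#|leaves| := (norm1 (wvec u))^-1 *: wvec u.

Definition neighbors (v : V) : seq V := enum [set x | e v x].

End SpliceDiagram.

Section Convex.
Variables (R : realType) (n : nat).

Definition convex_hull (S : seq 'rV[R]_n) (x : 'rV[R]_n) : Prop :=
  exists c : 'I_(size S) -> R,
    [/\ forall i, 0 <= c i, \sum_i c i = 1 & x = \sum_i c i *: S`_i].

Definition affine_hull (A : 'rV[R]_n -> Prop) (x : 'rV[R]_n) : Prop :=
  exists k (c : 'I_k -> R) (p : 'I_k -> 'rV[R]_n),
    [/\ forall i, A (p i), \sum_i c i = 1 & x = \sum_i c i *: p i].

(** relative interior: interior of A within its affine hull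
    (balls taken for the sup-norm; all norms on R^n are equivalent) *)
Definition relative_interior (A : 'rV[R]_n -> Prop) (x : 'rV[R]_n) : Prop :=
  A x /\ exists eps : R, 0 < eps /\
    forall y, affine_hull A y -> (forall j, `|y ord0 j - x ord0 j| < eps) -> A y.
End Convex.

From HB Require Import structures.
From mathcomp Require Import all_boot all_order all_algebra.
From mathcomp Require Import boolp reals.
From mathcomp Require Import ring lra zify.
Import Order.TTheory GRing.Theory Num.Theory.
Local Open Scope ring_scope.
Set Implicit Arguments. Unset Strict Implicit. Unset Printing Implicit Defensive.

(* Put s = w_v.  Every leaf lies behind exactly one neighbour u_i of v, so
   s = \sum_i t_i, where t_i is s restricted to the leaves behind u_i: these rows
   are nonnegative with disjoint supports.  Crossing the edge [v, u_i] multiplies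
   l_{., lambda} by one of two constants according as lambda is behind u_i or not,
   whence w_{u_i} = beta_i s + gamma_i t_i with beta_i >= 0, and gamma_i > 0 is
   exactly the edge determinant condition.  A combination \sum_i z_i w_{u_i} read at
   a leaf behind u_m equals s_lambda (Z + gamma_m z_m) with Z = \sum_i beta_i z_i.
   So a vanishing combination gives Z (1 + \sum_i beta_i / gamma_i) = 0, hence z = 0;
   and near rho(v) the same identity keeps every barycentric coordinate positive. *)


Definition l1_normalize (R : realType) n (x : 'rV[R]_n) := (norm1 x)^-1 *: x.

Lemma ger0_norm1 (R : realType) n (x : 'rV[R]_n) :
  (forall j, 0 <= x ord0 j) -> norm1 x = \sum_j x ord0 j.
Proof. by move=> x_ge0; apply: eq_bigr => j _; rewrite ger0_norm. Qed.

Lemma ler_coord_norm1 (R : realType) n (x : 'rV[R]_n) j : `|x ord0 j| <= norm1 x.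
Proof. by rewrite /norm1 (bigD1 j) //= lerDl sumr_ge0. Qed.

Lemma affine_hull_convex_hull (R : realType) n (S : seq 'rV[R]_n) y :
  affine_hull (convex_hull S) y ->
  exists2 b : 'I_(size S) -> R, \sum_i b i = 1 & y = \sum_i b i *: S`_i.
Proof.
move=> [k [c [p [p_hull c1 ->]]]].
have [f f_coords] := choice p_hull.
exists (fun i => \sum_l c l * f l i).
  rewrite exchange_big -[RHS]c1; apply: eq_bigr => l _.
  by rewrite -mulr_sumr; case: (f_coords l) => _ -> _; rewrite mulr1.
under [RHS]eq_bigr do rewrite scaler_suml.
rewrite exchange_big; apply: eq_bigr => l _.
case: (f_coords l) => _ _ {1}->; rewrite scaler_sumr.
by apply: eq_bigr => i _; rewrite scalerA.
Qed.

Section BranchDecomposition.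
Variables (R : realType) (n : nat) (S : seq 'rV[R]_n).
Variables (t : 'I_(size S) -> 'rV[R]_n) (beta gamma : 'I_(size S) -> R).
Variable witness : 'I_(size S) -> 'I_n.
Hypotheses (S_neq0 : (0 < size S)%N)
  (beta_ge0 : forall i, 0 <= beta i) (gamma_gt0 : forall i, 0 < gamma i)
  (t_ge0 : forall i j, 0 <= t i ord0 j)
  (t_witness : forall i, 1 <= t i ord0 (witness i))
  (t_witness_other : forall i m, m != i -> t m ord0 (witness i) = 0).

Let s := \sum_i t i.
Let w i := beta i *: s + gamma i *: t i.
Hypothesis S_nth : forall i : 'I_(size S), S`_i = l1_normalize (w i).

Let gamma_neq0 i : gamma i != 0. Proof. exact: lt0r_neq0. Qed.

Let s_coord j : s ord0 j = \sum_i t i ord0 j.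
Proof. by rewrite summxE. Qed.

Let s_ge0 j : 0 <= s ord0 j.
Proof. by rewrite s_coord sumr_ge0. Qed.

Let s_witness i : s ord0 (witness i) = t i ord0 (witness i).
Proof. by rewrite s_coord (bigD1 i) //= big1 ?addr0 // => m /t_witness_other. Qed.

Let w_coord i j : w i ord0 j = beta i * s ord0 j + gamma i * t i ord0 j.
Proof. by rewrite !mxE. Qed.

Let w_ge0 i j : 0 <= w i ord0 j.
Proof. by rewrite w_coord addr_ge0 // mulr_ge0 // ?s_ge0 // ltW. Qed.

Let norm1_w_gt0 i : 0 < norm1 (w i).
Proof.
apply: lt_le_trans (ler_coord_norm1 _ (witness i)).
rewrite ger0_norm ?w_ge0 // w_coord ltr_wpDl ?mulr_ge0 ?mulr_gt0 //.
exact: lt_le_trans (t_witness i).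
Qed.

Let norm1_s_gt0 : 0 < norm1 s.
Proof.
pose i := Ordinal S_neq0.
apply: lt_le_trans (ler_coord_norm1 _ (witness i)).
by rewrite ger0_norm ?s_ge0 // s_witness (lt_le_trans _ (t_witness i)).
Qed.

Let norm1_s : norm1 s = \sum_i norm1 (t i).
Proof.
rewrite ger0_norm1 //; under eq_bigr do rewrite s_coord.
by rewrite exchange_big; apply: eq_bigr => i _; rewrite ger0_norm1.
Qed.

Let norm1_w i : norm1 (w i) = beta i * norm1 s + gamma i * norm1 (t i).
Proof.
rewrite !ger0_norm1 // !mulr_sumr -big_split /=.
by apply: eq_bigr => j _; rewrite w_coord.
Qed.

Let comb_at_witness (z : 'I_(size S) -> R) m :
  (\sum_i z i *: w i) ord0 (witness m) =
  s ord0 (witness m) * (\sum_i beta i * z i + gamma m * z m).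
Proof.
rewrite summxE; under eq_bigr do rewrite mxE w_coord mulrDr.
rewrite big_split /=.
have -> : \sum_i z i * (gamma i * t i ord0 (witness m)) =
          z m * (gamma m * t m ord0 (witness m)).
  by rewrite (bigD1 m) //= big1 ?addr0 // => i /t_witness_other ->; rewrite !mulr0.
rewrite -s_witness mulrDr mulr_sumr; congr (_ + _); last by ring.
by apply: eq_bigr => i _; ring.
Qed.

Let T := \sum_i beta i / gamma i.

Let T_ge0 : 0 <= T.
Proof. by rewrite sumr_ge0 // => i _; rewrite divr_ge0 // ltW. Qed.

Let T1_gt0 : 0 < 1 + T. Proof. by rewrite ltr_wpDr. Qed.

Let T1_neq0 : 1 + T != 0. Proof. exact: lt0r_neq0. Qed.

Lemma free_branch_decomposition : free S.
Proof.
apply/(@freeP _ _ _ (in_tuple S)) => c c_rel.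
pose z i := c i / norm1 (w i); set Z := \sum_i beta i * z i.
have z_rel : \sum_i z i *: w i = 0.
  by rewrite -[RHS]c_rel; apply: eq_bigr => i _; rewrite /= S_nth scalerA.
have Z_coord m : Z + gamma m * z m = 0.
  have /esym/eqP := comb_at_witness z m; rewrite z_rel mxE mulf_eq0.
  by rewrite s_witness gt_eqF ?(lt_le_trans _ (t_witness m)) //= => /eqP.
have zE m : z m = - Z / gamma m.
  apply: (mulfI (gamma_neq0 m)); rewrite [RHS]mulrCA divff // mulr1.
  by move: (Z_coord m); lra.
have Z0 : Z = 0.
  have : Z * (1 + T) = 0.
    rewrite mulrDr mulr1 {1}/Z /T mulr_sumr -big_split big1 //= => i _.
    by rewrite zE; ring.
  by move/eqP; rewrite mulf_eq0 (negbTE T1_neq0) orbF => /eqP.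
move=> i; have /eqP := zE i; rewrite Z0 oppr0 mul0r mulf_eq0 invr_eq0.
by rewrite (negbTE (lt0r_neq0 (norm1_w_gt0 i))) orbF => /eqP.
Qed.

(* The coefficients come from [(1 + T) *: s = \sum_i (gamma i)^-1 *: w i], a consequence
   of [t i = (w i - beta i *: s) / gamma i] and [s = \sum_i t i]. *)
Lemma l1_normalize_in_convex_hull : convex_hull S (l1_normalize s).
Proof.
have Ns0 : norm1 s != 0 by rewrite lt0r_neq0.
exists (fun i => norm1 (w i) / (norm1 s * (1 + T) * gamma i)); split.
- by move=> i; rewrite divr_ge0 ?mulr_ge0 ?ltW.
- have -> : \sum_i norm1 (w i) / (norm1 s * (1 + T) * gamma i) =
      \sum_i (beta i / gamma i * norm1 s + norm1 (t i)) / (norm1 s * (1 + T)).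
    apply: eq_bigr => i _; rewrite norm1_w.
    by field; rewrite Ns0 T1_neq0 gamma_neq0.
  by rewrite -mulr_suml big_split /= -mulr_suml -norm1_s -/T; field; rewrite T1_neq0 Ns0.
- apply/matrixP => i0 j; rewrite ord1 {1}mxE [RHS]summxE.
  have -> : \sum_i (norm1 (w i) / (norm1 s * (1 + T) * gamma i) *: S`_i) ord0 j =
      \sum_i (beta i / gamma i * s ord0 j + t i ord0 j) / (norm1 s * (1 + T)).
    apply: eq_bigr => i _; rewrite S_nth !mxE s_coord.
    by field; rewrite Ns0 T1_neq0 gamma_neq0 lt0r_neq0.
  by rewrite -mulr_suml big_split /= -mulr_suml -s_coord -/T; field; rewrite T1_neq0 Ns0.
Qed.

Let a := (norm1 s)^-1.
(* Any radius below [a / (1 + 2 T)] would do. *)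
Let eps := a / (4 * (1 + T)).

Let eps_gt0 : 0 < eps.
Proof. by rewrite divr_gt0 ?invr_gt0 ?mulr_gt0. Qed.

Lemma coords_ge0_near_l1_normalize (b : 'I_(size S) -> R) :
  (forall j, `|(\sum_i b i *: S`_i) ord0 j - l1_normalize s ord0 j| < eps) ->
  forall m, 0 <= b m.
Proof.
move=> near_s m.
have a_gt0 : 0 < a by rewrite invr_gt0.
pose z i := b i / norm1 (w i); set Z := \sum_i beta i * z i.
pose Y i := Z + gamma i * z i.
have Y_near i : `|Y i - a| < eps.
  have := near_s (witness i).
  have -> : \sum_i b i *: S`_i = \sum_i z i *: w i.
    by apply: eq_bigr => l _; rewrite S_nth scalerA.
  rewrite comb_at_witness [l1_normalize _ _ _]mxE -/Z -/(Y i) -/a (mulrC a) -mulrBr normrM.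
  rewrite ger0_norm //; apply: le_lt_trans; apply: ler_peMl => //.
  by rewrite s_witness.
have ZT : Z * (1 + T) = \sum_i beta i / gamma i * Y i.
  rewrite /Y; under eq_bigr do rewrite mulrDr.
  rewrite big_split /= -mulr_suml -/T mulrDr mulr1 addrC mulrC; congr (_ + _).
  by apply: eq_bigr => i _; field; rewrite gamma_neq0.
have sum_le : \sum_i beta i / gamma i * Y i <= T * (a + eps).
  rewrite /T mulr_suml; apply: ler_sum => i _.
  apply: ler_wpM2l; first exact: divr_ge0 (beta_ge0 i) (ltW (gamma_gt0 i)).
  by have := Y_near i; rewrite ltr_norml => /andP[_]; lra.
have Ym_ge : (1 + T) * (a - eps) <= (1 + T) * Y m.
  apply: ler_wpM2l; first exact: ltW.
  by have := Y_near m; rewrite ltr_norml => /andP[+ _]; lra.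
have eps_def : eps * (4 * (1 + T)) = a by rewrite mulfVK // lt0r_neq0 ?mulr_gt0.
have eps_pos := eps_gt0.
have : 0 < (1 + T) * (Y m - Z).
  by rewrite mulrBr (mulrC _ Z) ZT; nra.
rewrite pmulr_rgt0 // /Y addrC addKr pmulr_rgt0 // /z => /ltW.
by rewrite pmulr_lge0 ?invr_gt0.
Qed.

Lemma l1_normalize_relative_interior :
  relative_interior (convex_hull S) (l1_normalize s).
Proof.
split; first exact: l1_normalize_in_convex_hull.
exists eps; split=> //.
move=> y /affine_hull_convex_hull [b b1 ->] near_s.
by exists b; split=> //; apply: coords_ge0_near_l1_normalize.
Qed.

End BranchDecomposition.

Section Tree.
Variables (V : finType) (e : rel V).
Hypotheses (e_sym : symmetric e) (e_irr : irreflexive e)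
  (e_acyclic : forall p : seq V, uniq p -> (2 < size p)%N -> ~~ cycle e p).

Lemma leaf_adj_unique y x z : leafb e y -> e y x -> e y z -> z = x.
Proof.
move=> /cards1P[a ya] yx yz.
have : x \in [set a] by rewrite -ya inE.
have : z \in [set a] by rewrite -ya inE.
by rewrite !inE => /eqP-> /eqP->.
Qed.

Lemma adj_neq x y : e x y -> x != y.
Proof. by apply: contraTneq => ->; rewrite e_irr. Qed.

Lemma nth_neighbors_bij v k : k = size (neighbors e v) ->
  [/\ forall i : 'I_k, e v (nth v (neighbors e v) i),
      injective (fun i : 'I_k => nth v (neighbors e v) i) &
      forall y, e v y -> exists i : 'I_k, nth v (neighbors e v) i = y].
Proof.
move=> ->; have mem_nbr y : (y \in neighbors e v) = e v y by rewrite mem_enum inE.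
split=> [i | i m /eqP | y].
- by rewrite -mem_nbr mem_nth.
- by rewrite nth_uniq ?enum_uniq // => /eqP/val_inj.
rewrite -mem_nbr => y_nbr; have y_lt : (index y (neighbors e v) < size (neighbors e v))%N.
  by rewrite index_mem.
by exists (Ordinal y_lt); rewrite nth_index.
Qed.

Lemma simple_path_unique x p q : path e x p -> path e x q ->
  uniq (x :: p) -> uniq (x :: q) -> last x p = last x q -> p = q.
Proof.
elim: p x q => [|a p IH] x q.
  case: q => [//|b q] _ /= _ _ /andP[+ _] lq.
  by rewrite lq mem_last.
move=> /= /andP[xa a_p] x_q /andP[]; rewrite inE negb_or => /andP[xa_neq x_nin] uap uxq lq.
case: (boolP (a \in q)) => aq; last first.
  have := IH a (x :: q) a_p; rewrite /= e_sym xa x_q => /(_ isT uap).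
  rewrite inE negb_or aq eq_sym xa_neq uxq => /(_ isT lq) pE.
  by move: x_nin; rewrite pE mem_head.
case/splitPr: aq x_q uxq lq => q1 q2; case: q1 => [|c q1] x_q uxq lq.
  by move: x_q uxq => /= /andP[_ a_q] /andP[_ uaq]; rewrite (IH a q2 a_p a_q uap uaq lq).
(* Otherwise x, c, .., a is a cycle, closed by the edge [a, x]. *)
exfalso; have uxca : uniq (x :: rcons (c :: q1) a).
  have : uniq ((x :: rcons (c :: q1) a) ++ q2) by rewrite /= cat_rcons.
  by rewrite cat_uniq => /andP[].
have := e_acyclic uxca; rewrite /= size_rcons ltnS ltnS ltn0Sn => /(_ isT) /negP; apply.
move: x_q; rewrite cat_path => /andP[x_c /= /andP[ca _]].
move: x_c => /= /andP[-> c_q1].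
by rewrite !rcons_path last_rcons c_q1 ca e_sym xa.
Qed.

Lemma neighbor_on_simple_path x p y : path e x p -> uniq (x :: p) ->
  y \in p -> e x y -> y = head x p.
Proof.
move=> xp ux yp exy; case/splitPr: yp xp ux => p1 p2 xp ux.
have : p1 ++ [:: y] = [:: y].
  apply: (@simple_path_unique x) => //.
  - by move: xp; rewrite !cat_path /= => /and3P[-> -> _].
  - by rewrite /= exy.
  - by move: ux; rewrite -cat_cons -(cat1s y) catA cat_uniq => /andP[].
  - by rewrite /= inE andbT adj_neq.
  - by rewrite last_cat.
by case: p1 {xp ux} => //= a [|b p1] [].
Qed.

Lemma on_geodesicE x p w : path e x p -> uniq (x :: p) ->
  `[< on_geodesic e x (last x p) w >] = (w \in x :: p).
Proof.
move=> xp ux; apply/asboolP/idP => [[q [xq lq uq wq]] | wp]; last by exists p.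
by rewrite -(simple_path_unique xq xp uq ux lq).
Qed.

Lemma leaf_at_maximal_path_end x p : path e x p -> uniq (x :: p) -> p != [::] ->
  (forall y, e (last x p) y -> y \in x :: p) -> leafb e (last x p).
Proof.
move=> xp ux p_neq0 nbr_on_p; set z := last x p.
have xpE : x :: p = rcons (belast x p) z by rewrite lastI.
set r := rev (belast x p).
have zr : path e z r.
  by rewrite rev_path (eq_path (e' := e)) -?xpE // => a b; rewrite e_sym.
have uzr : uniq (z :: r) by rewrite -rev_rcons rev_uniq -xpE.
case rE: r zr uzr => [|a r'] zr uzr.
  move/(congr1 size): rE; rewrite size_rev size_belast => /eqP.
  by rewrite size_eq0 (negbTE p_neq0).
apply/cards1P; exists a; apply/setP => y; rewrite !inE; apply/idP/eqP => [zy|->].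
  have := nbr_on_p y zy; rewrite xpE mem_rcons inE => /orP[/eqP yz|].
    by move: zy; rewrite yz e_irr.
  by rewrite -mem_rev -/r rE => yr; rewrite (neighbor_on_simple_path zr uzr yr zy).
by move: zr => /= /andP[].
Qed.

Lemma exists_leaf_behind x u : e x u ->
  exists p, [/\ path e u p, uniq (x :: u :: p) & leafb e (last u p)].
Proof.
move=> exu.
suff: forall m q, (#|V| - size q <= m)%N -> path e u q -> uniq (x :: u :: q) ->
  exists p, [/\ path e u p, uniq (x :: u :: p) & leafb e (last u p)].
  by move/(_ #|V| [::]); apply; rewrite ?subn0 //= inE adj_neq.
elim=> [|m IH] q q_short u_q uxq.
  exfalso; have := max_card (mem (x :: u :: q)); rewrite (card_uniqP uxq) /=.
  by move: q_short; rewrite leqn0 subn_eq0 => /leq_ltn_trans h /ltnW /h; rewrite ltnn.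
case: (pickP (fun y => e (last u q) y && (y \notin x :: u :: q))) => [y /andP[qy yq]|maximal].
  apply: (IH (rcons q y)); first by rewrite size_rcons; lia.
    by rewrite rcons_path u_q.
  by rewrite -!rcons_cons rcons_uniq yq.
exists q; split=> //; apply: (@leaf_at_maximal_path_end x (u :: q)) => //=.
  by rewrite exu u_q.
by move=> y qy; have := maximal y; rewrite /= qy => /negbFE.
Qed.

Hypothesis e_connected : forall x y, connect e x y.

Lemma exists_simple_path x y : exists p, [/\ path e x p, last x p = y & uniq (x :: p)].
Proof.
have /connectP [p0 xp0 ->] := e_connected x y.
by case: (shortenP xp0) => p xp up _; exists p.
Qed.

Lemma on_geodesic_end x y : `[< on_geodesic e x y y >].
Proof.
have [p [xp <- up]] := exists_simple_path x y.
by rewrite on_geodesicE // mem_last.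
Qed.

Lemma exists_first_step x l : x != l ->
  exists u p, [/\ e x u, path e u p, last u p = l & uniq (x :: u :: p)].
Proof.
move=> xl; have [[|u p] [xp lp up]] := exists_simple_path x l.
  by move: xl; rewrite -lp eqxx.
by move: xp => /= /andP[exu u_p]; exists u, p.
Qed.

Lemma on_geodesic_adj x u l p y : e x u -> path e u p -> last u p = l ->
  uniq (x :: u :: p) -> e x y -> `[< on_geodesic e x l y >] = (y == u).
Proof.
move=> exu u_p <- uxp exy.
rewrite -[last u p]/(last x (u :: p)) on_geodesicE /= ?exu //.
rewrite inE [y == x]eq_sym (negbTE (adj_neq exy)).
apply/idP/eqP => [yp|->]; last exact: mem_head.
by apply: (neighbor_on_simple_path _ uxp yp exy); rewrite /= exu.
Qed.

Lemma first_step_unique x l : x != l ->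
  exists u, e x u /\ forall y, e x y -> `[< on_geodesic e x l y >] = (y == u).
Proof.
move=> xl; have [u [p [exu u_p lp uxp]]] := exists_first_step xl.
by exists u; split=> // y; apply: on_geodesic_adj lp uxp.
Qed.

Variable d : V -> V -> nat.

Definition ell_along (c : seq V) : nat :=
  \prod_(w | nodeb e w && (w \in c)) \prod_(z | e w z && (z \notin c)) d w z.

(* [d_except x u] is d_x / d_{x,u} in the notation of the paper. *)
Definition d_except (x u : V) : nat := \prod_(z | e x z && (z != u)) d x z.

Lemma ell_along_eq c1 c2 : c1 =i c2 -> ell_along c1 = ell_along c2.
Proof.
move=> c12; apply: eq_big => [w|w _]; first by rewrite c12.
by apply: eq_bigl => z; rewrite c12.
Qed.

Lemma ell_simple_path x p : path e x p -> uniq (x :: p) ->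
  ell e d x (last x p) = ell_along (x :: p).
Proof.
move=> xp ux; apply: eq_big => [w|w _]; first by rewrite on_geodesicE.
by apply: eq_bigl => z; rewrite on_geodesicE.
Qed.

Lemma ell_along1 z :
  ell_along [:: z] = if nodeb e z then (\prod_(y | e z y) d z y)%N else 1%N.
Proof.
rewrite /ell_along; case: ifP => zN.
  rewrite (big_pred1 z) => [|w /=]; last first.
    by rewrite inE; case: eqVneq => [->|]; rewrite ?zN ?andbF.
  by apply: eq_bigl => y; rewrite inE; case: (boolP (e z y)) => //= /adj_neq; rewrite eq_sym.
by apply: big1 => w /andP[wN]; rewrite inE => /eqP wz; move: zN; rewrite -wz wN.
Qed.

Lemma ell_along_cons x y c : x \notin c -> y \in c -> e x y ->
  (forall z, z \in c -> e x z -> z = y) ->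
  ((if nodeb e y then d y x else 1) * ell_along (x :: c) =
   (if nodeb e x then d_except x y else 1) * ell_along c)%N.
Proof.
move=> xc yc exy nb.
pose G := \prod_(w | nodeb e w && (w \in c)) \prod_(z | e w z && (z \notin x :: c)) d w z.
have E_xc : ell_along (x :: c) = ((if nodeb e x then d_except x y else 1) * G)%N.
  rewrite /ell_along /G; case: ifP => xN.
    rewrite (bigD1 x) /= ?mem_head ?xN //; congr (_ * _)%N.
      apply: eq_bigl => z; rewrite inE negb_or.
      case: (boolP (e x z)) => //= exz; rewrite eq_sym adj_neq //=.
      case: (boolP (z \in c)) => zc /=; first by rewrite (nb z zc exz) eqxx.
      by apply/esym/eqP => zy; move: zc; rewrite zy yc.
    apply: eq_bigl => w; rewrite inE.
    by case: (eqVneq w x) => [->|wx] /=; rewrite ?(negbTE xc) ?andbF ?andbT.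
  rewrite mul1n; apply: eq_bigl => w; rewrite inE.
  by case: (eqVneq w x) => [->|wx] /=; rewrite ?xN ?(negbTE xc).
have E_c : ell_along c = ((if nodeb e y then d y x else 1) * G)%N.
  have split_w w : nodeb e w && (w \in c) ->
      (\prod_(z | e w z && (z \notin c)) d w z =
       (if w == y then d y x else 1) * \prod_(z | e w z && (z \notin x :: c)) d w z)%N.
    move=> /andP[wN wc]; case: (eqVneq w y) => [->|wy].
      rewrite (bigD1 x) /=; last by rewrite e_sym exy xc.
      congr (_ * _)%N; apply: eq_bigl => z; rewrite inE negb_or.
      by case: (e y z); case: (z \in c); case: (z == x).
    rewrite mul1n; apply: eq_bigl => z; rewrite inE negb_or.
    case: (eqVneq z x) => [->|zx] //=; case: (boolP (e w x)) => //= ewx.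
    by move: wy; rewrite (nb w wc) ?eqxx // e_sym.
  rewrite /ell_along (eq_bigr _ split_w) big_split /=; congr (_ * _)%N.
  case: ifP => yN; last first.
    by apply: big1 => w /andP[wN _]; case: eqP => // wy; move: wN; rewrite wy yN.
  by rewrite (bigD1 y) /= ?yN ?yc // eqxx big1 ?muln1 // => w /andP[_ /negbTE ->].
by rewrite E_xc E_c mulnCA.
Qed.

Hypothesis d_gt0 : forall x y, nodeb e x -> e x y -> (0 < d x y)%N.

Lemma ell_gt0 x y : (0 < ell e d x y)%N.
Proof.
apply: prodn_cond_gt0 => w /andP[wN _]; apply: prodn_cond_gt0 => z /andP[wz _].
exact: d_gt0.
Qed.

Lemma d_except_gt0 x u : nodeb e x -> (0 < d_except x u)%N.
Proof. by move=> xN; apply: prodn_cond_gt0 => z /andP[xz _]; apply: d_gt0. Qed.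

Lemma ell_toward x y l : x != l -> nodeb e x -> nodeb e y -> e x y ->
  `[< on_geodesic e x l y >] -> (d_except x y * ell e d y l = d y x * ell e d x l)%N.
Proof.
move=> xl xN yN exy; have [u [p [exu u_p <- uxp]]] := exists_first_step xl.
rewrite (on_geodesic_adj _ u_p) // => /eqP yu; subst y.
have [xup up] : x \notin u :: p /\ uniq (u :: p) by case/andP: uxp.
rewrite -[last u p]/(last x (u :: p)) !ell_simple_path /= ?exu //.
have nb z : z \in u :: p -> e x z -> z = u.
  by move=> zp xz; apply: (neighbor_on_simple_path _ uxp zp xz); rewrite /= exu.
by have := ell_along_cons xup (mem_head _ _) exu nb; rewrite xN yN mulnC => ->.
Qed.

Lemma ell_away x y l : x != l -> nodeb e x -> nodeb e y -> e x y ->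
  ~~ `[< on_geodesic e x l y >] -> (d x y * ell e d y l = d_except y x * ell e d x l)%N.
Proof.
move=> xl xN yN exy; have [u [p [exu u_p <- uxp]]] := exists_first_step xl.
rewrite (on_geodesic_adj _ u_p) // => yu.
have yxup : y \notin x :: u :: p.
  rewrite inE negb_or eq_sym adj_neq //=.
  by apply: contra yu => yp; rewrite (neighbor_on_simple_path _ uxp yp exy) //= exu.
have y_path : path e y (x :: u :: p) by rewrite /= e_sym exy exu.
have uyxp : uniq (y :: x :: u :: p) by rewrite /= yxup.
have nb z : z \in x :: u :: p -> e y z -> z = x.
  by move=> zp yz; apply: (neighbor_on_simple_path y_path uyxp zp yz).
rewrite -[last u p]/(last y (x :: u :: p)) ell_simple_path //.
rewrite -[last y _]/(last x (u :: p)) ell_simple_path /= ?exu //.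
have yx : e y x by rewrite e_sym.
by have := ell_along_cons yxup (mem_head _ _) yx nb; rewrite xN yN.
Qed.

Lemma leaf_toward x y l : x != l -> leafb e y -> e x y ->
  `[< on_geodesic e x l y >] -> l = y.
Proof.
move=> xl yL exy; have [u [p [exu u_p <- uxp]]] := exists_first_step xl.
rewrite (on_geodesic_adj _ u_p) // => /eqP yu; subst y.
case: p u_p uxp => [//|z p] /= /andP[uz _] /and3P[x_nin _ _].
have zx : z = x by apply: leaf_adj_unique yL _ uz; rewrite e_sym.
by move: x_nin; rewrite zx !inE eqxx orbT.
Qed.

Lemma ell_leaf_adj x y : nodeb e x -> leafb e y -> e x y -> ell e d x y = d_except x y.
Proof.
move=> xN yL exy; have yN : ~~ nodeb e y by move: yL; rewrite /leafb /nodeb => /eqP->.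
rewrite -[y in ell e d x y]/(last x [:: y]) ell_simple_path /= ?exy ?inE ?adj_neq //.
have x_nin : x \notin [:: y] by rewrite inE adj_neq.
have nb z : z \in [:: y] -> e x z -> z = y by rewrite inE => /eqP.
have := ell_along_cons x_nin (mem_head _ _) exy nb.
by rewrite xN (negbTE yN) ell_along1 (negbTE yN) mul1n muln1.
Qed.

Lemma ell_edge x u : nodeb e x -> nodeb e u -> e x u ->
  ell e d u x = (d_except u x * d_except x u)%N.
Proof.
move=> xN uN exu; have ux : e u x by rewrite e_sym.
rewrite -[x in ell e d u x]/(last u [:: x]) ell_simple_path /= ?ux ?inE ?(adj_neq ux) //.
rewrite (@ell_along_eq _ [:: x; u]); last by move=> w; rewrite !inE orbC.
have x_nin : x \notin [:: u] by rewrite inE adj_neq.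
have nb z : z \in [:: u] -> e x z -> z = u by rewrite inE => /eqP.
have := ell_along_cons x_nin (mem_head _ _) exu nb.
rewrite xN uN ell_along1 uN (bigD1 x) //= -/(d_except u x) mulnCA => /eqP.
by rewrite eqn_mul2l gtn_eqF ?d_gt0 //= mulnC => /eqP.
Qed.

Section NodeStar.
Variables (R : realType) (v : V).
Hypothesis v_node : nodeb e v.

Definition branch_row (y : V) : 'rV[R]_#|leaves e| :=
  \row_j (if `[< on_geodesic e v (enum_val j) y >] then wvec e d R v ord0 j else 0).

(* By [ell_away] and [ell_toward], [beta y] and [beta y + gamma y] are the ratios
   [ell y l / ell v l] for the leaves [l] not behind, resp. behind, the neighbour [y]. *)
Definition beta (y : V) : R :=
  if nodeb e y then (d_except y v)%:R / (d v y)%:R else 0.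

Definition gamma (y : V) : R :=
  (if nodeb e y then (d y v)%:R else 1) / (d_except v y)%:R - beta y.

Let leaf_enum (j : 'I_#|leaves e|) : leafb e (enum_val j).
Proof. by have := enum_valP j; rewrite inE. Qed.

Let node_not_leaf x : nodeb e x -> ~~ leafb e x.
Proof. by rewrite /nodeb /leafb; case: (valency e x) => [|[]]. Qed.

Let v_neq_leaf (j : 'I_#|leaves e|) : v != enum_val j.
Proof. by apply: contraTneq (leaf_enum j) => <-; apply: node_not_leaf. Qed.

Let wvec_v (j : 'I_#|leaves e|) : wvec e d R v ord0 j = (ell e d v (enum_val j))%:R.
Proof. by rewrite mxE (negbTE (node_not_leaf v_node)). Qed.

Let adj_not_node_leaf y : e v y -> ~~ nodeb e y -> leafb e y.
Proof.
move=> vy; have : (0 < valency e y)%N by apply/card_gt0P; exists v; rewrite inE e_sym.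
by rewrite /nodeb /leafb; case: (valency e y) => [|[|]].
Qed.

Let d_except_neq0 x y : nodeb e x -> (d_except x y)%:R != 0 :> R.
Proof. by move=> xN; rewrite pnatr_eq0 -lt0n d_except_gt0. Qed.

Let d_neq0 y : e v y -> (d v y)%:R != 0 :> R.
Proof. by move=> vy; rewrite pnatr_eq0 -lt0n d_gt0. Qed.

Lemma beta_ge0 y : 0 <= beta y.
Proof. by rewrite /beta; case: ifP => // _; rewrite divr_ge0. Qed.

Lemma gamma_gt0 y : edge_determinant_condition e d -> e v y -> 0 < gamma y.
Proof.
move=> edc vy; rewrite /gamma /beta; case: ifP => yN; last first.
  by rewrite subr0 divr_gt0 // ltr0n d_except_gt0.
have := edc y v; rewrite e_sym vy yN v_node => /(_ isT isT isT).
rewrite (ell_edge v_node yN vy) -(ltr_nat R) !natrM.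
move=> edge_det; rewrite -subr_gt0 in edge_det.
have -> : (d y v)%:R / (d_except v y)%:R - (d_except y v)%:R / (d v y)%:R =
    ((d y v)%:R * (d v y)%:R - (d_except y v)%:R * (d_except v y)%:R) /
    ((d_except v y)%:R * (d v y)%:R) :> R.
  by field; rewrite d_except_neq0 ?d_neq0.
by rewrite divr_gt0 // mulr_gt0 // ltr0n ?d_except_gt0 ?d_gt0.
Qed.

Lemma wvec_neighbor y : e v y ->
  wvec e d R y = beta y *: wvec e d R v + gamma y *: branch_row y.
Proof.
move=> vy; apply/matrixP => i0 j; rewrite ord1 !mxE (negbTE (node_not_leaf v_node)).
set l := enum_val j; have vl : v != l := v_neq_leaf j.
rewrite /gamma /beta; case: (boolP (nodeb e y)) => yN.
  rewrite (negbTE (node_not_leaf yN)).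
  case: (boolP `[< on_geodesic e v l y >]) => behind.
    have /(congr1 (GRing.natmul (1 : R))) := ell_toward vl v_node yN vy behind.
    rewrite !natrM => ell_yl; apply: (mulfI (d_except_neq0 y v_node)); rewrite ell_yl.
    by field; rewrite d_except_neq0 ?d_neq0.
  have /(congr1 (GRing.natmul (1 : R))) := ell_away vl v_node yN vy behind.
  rewrite !natrM => ell_yl; apply: (mulfI (d_neq0 vy)); rewrite ell_yl mulr0 addr0.
  by field; rewrite d_neq0.
have yL := adj_not_node_leaf vy yN; rewrite yL subr0 mul0r add0r.
case: (boolP `[< on_geodesic e v l y >]) => behind.
  rewrite (leaf_toward vl yL vy behind) eqxx ell_leaf_adj //.
  by rewrite mul1r mulVf ?d_except_neq0.
have /negPf -> : y != l by apply: contraNneq behind => ->; apply: on_geodesic_end.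
by rewrite mulr0.
Qed.

Lemma branch_row_ge0 y j : 0 <= branch_row y ord0 j.
Proof. by rewrite mxE; case: ifP => // _; rewrite wvec_v ler0n. Qed.

Lemma exists_leaf_behind_adj y : e v y ->
  exists j : 'I_#|leaves e|, `[< on_geodesic e v (enum_val j) y >].
Proof.
move=> vy; have [p [y_p uvyp pL]] := exists_leaf_behind vy.
have pl : last y p \in leaves e by rewrite inE.
exists (enum_rank_in pl (last y p)); rewrite enum_rankK_in //.
by rewrite (on_geodesic_adj vy y_p erefl uvyp vy) eqxx.
Qed.

Section NeighborEnumeration.
Variables (k : nat) (u : 'I_k -> V).
Hypotheses (u_adj : forall i, e v (u i)) (u_inj : injective u)
  (u_onto : forall y, e v y -> exists i, u i = y).

Lemma wvec_node_sum : wvec e d R v = \sum_i branch_row (u i).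
Proof.
apply/matrixP => r j; rewrite ord1 summxE.
have [y [vy first_step]] := first_step_unique (v_neq_leaf j).
have [i0 u_i0] := u_onto vy; subst y.
rewrite (bigD1 i0) //= big1 ?addr0 => [|i i_neq].
  by rewrite [branch_row _ _ _]mxE first_step ?eqxx.
by rewrite mxE first_step // (inj_eq u_inj) (negbTE i_neq).
Qed.

Lemma exists_branch_witness : exists witness : 'I_k -> 'I_#|leaves e|,
  (forall i, 1 <= branch_row (u i) ord0 (witness i)) /\
  (forall i m, m != i -> branch_row (u m) ord0 (witness i) = 0).
Proof.
have [witness behind] := choice (fun i => exists_leaf_behind_adj (u_adj i)).
exists witness; split=> [i | i m mi]; rewrite mxE.
  by rewrite behind wvec_v ler1n ell_gt0.
have [y [vy first_step]] := first_step_unique (v_neq_leaf (witness i)).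
move: (behind i); rewrite !first_step // => /eqP <-.
by rewrite (inj_eq u_inj) (negbTE mi).
Qed.

End NeighborEnumeration.
End NodeStar.
End Tree.

Unset Implicit Arguments.

Theorem proposition5p7 (R : realType) (V : finType) (e : rel V) (d : V -> V -> nat) :
  splice_diagram e d -> edge_determinant_condition e d ->
  forall v : V, nodeb e v ->
    free [seq rho e d R u | u <- neighbors e v] /\
    relative_interior (convex_hull [seq rho e d R u | u <- neighbors e v]) (rho e d R v).
Proof.
move=> [[e_sym e_irr e_connected e_acyclic] _ _ d_gt0] edc v v_node.
set S := [seq rho e d R u | u <- neighbors e v].
pose u (i : 'I_(size S)) := nth v (neighbors e v) i.
have [u_adj u_inj u_onto] := nth_neighbors_bij (size_map (rho e d R) (neighbors e v)).
pose t i := branch_row e d R v (u i).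
have [witness [t_witness t_witness_other]] :=
  exists_branch_witness e_sym e_irr e_acyclic e_connected d_gt0 R v_node u_adj u_inj.
have s_sum := wvec_node_sum e_sym e_irr e_acyclic e_connected d R v_node u_adj u_inj u_onto.
have S_nth (i : 'I_(size S)) :
    S`_i = l1_normalize (beta e d R v (u i) *: \sum_m t m + gamma e d R v (u i) *: t i).
  rewrite (nth_map v) -?(size_map (rho e d R)) // -s_sum.
  by rewrite -(wvec_neighbor e_sym e_irr e_acyclic e_connected d_gt0 R v_node (u_adj i)).
have S_neq0 : (0 < size S)%N by rewrite size_map -cardE ltnW.
have beta_ge0 i := beta_ge0 e d R v (u i).
have gamma_gt0 i := gamma_gt0 e_sym e_irr e_acyclic d_gt0 R v_node edc (u_adj i).
have t_ge0 i j : 0 <= t i ord0 j := branch_row_ge0 d R v_node (u i) j.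
have -> : rho e d R v = l1_normalize (\sum_i t i) by rewrite -s_sum.
split.
  exact: free_branch_decomposition beta_ge0 gamma_gt0 t_ge0 t_witness t_witness_other S_nth.
exact: l1_normalize_relative_interior S_neq0 beta_ge0 gamma_gt0 t_ge0
  t_witness t_witness_other S_nth.
Qed.
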